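(* Let $R$ be a commutative domain, $B=R(t,\sigma,H,J)$, assume $\sigma^n=\mathrm{id}_R$, let $\mathcal O$ be a $\sigma$-orbit in $\operatorname{Maxspec}(R)$ of size $n$ containing no breaks, and let $\mathfrak m\in\mathcal O$. (1) If $N$ is a $\Lambda_n/(\mathfrak m)$-module, there is an invertible $R/\mathfrak m$-linear map $\theta\in\operatorname{Aut}_{R/\mathfrak m}(N)$ such that for all $a\in I^{(n)}$ and $b\in I^{(-n)}$, $at^n$ acts on $N$ as $\bar a\theta$ and $bt^{-n}$ acts as $\bar b\theta^{-1}$, where $\bar a,\bar b$ denote images in $R/\mathfrak m$ (so these act as $0$ when $a\in\mathfrak m$, resp. $b\in\mathfrak m$). (2) Conversely, if $N$ is an $R/\mathfrak m$-vector space and $\theta\in\operatorname{Aut}_{R/\mathfrak m}(N)$, then setting $R$ to act through $R/\mathfrak m$, $at^n\mapsto\bar a\theta$ and $bt^{-n}\mapsto\bar b\theta^{-1}$ defines a $\Lambda_n/(\mathfrak m)$-module structure on $N$. (3) Such an $N$ is a simple $\Lambda_n/(\mathfrak m)$-module if and only if $N$ has no $\theta$-invariant subspaces other than $0$ and $N$.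
   Context: $\Bbbk$ is a field; all algebras are associative unital $\Bbbk$-algebras. For an algebra $R$ and $\sigma\in\operatorname{Aut}_\Bbbk(R)$, $R[t,t^{-1};\sigma]$ is the skew Laurent ring: generated over $R$ by $t,t^{-1}$ with $tt^{-1}=t^{-1}t=1$ and $t^{\pm1}r=\sigma^{\pm1}(r)t^{\pm1}$ for $r\in R$. Given two-sided ideals $H,J$ of $R$, set $I^{(0)}=R$, $I^{(n)}=J\sigma(J)\cdots\sigma^{n-1}(J)$ for $n\ge1$, and $I^{(n)}=\sigma^{-1}(H)\sigma^{-2}(H)\cdots\sigma^{n}(H)$ for $n\le-1$; it is assumed throughout that $I^{(n)}\neq0$ for all $n\in\mathbb Z$. The Bell–Rogalski (BR) algebra is $R(t,\sigma,H,J)=\bigoplus_{n\in\mathbb Z}I^{(n)}t^n\subseteq R[t,t^{-1};\sigma]$; $B_k=I^{(k)}t^k$. For $R$ commutative, $\mathcal S(B)=\{\mathfrak p\in\operatorname{Spec}(R):\mathfrak p\supseteq HJ\}$; a maximal ideal $\mathfrak m$ is a break if $\sigma(\mathfrak m)\in\mathcal S(B)$. $\sigma$-orbits are orbits of $k\cdot\mathfrak m=\sigma^k(\mathfrak m)$ on $\operatorname{Maxspec}(R)$. With $\sigma^n=\mathrm{id}$: $\Lambda_n=\bigoplus_{k\in\mathbb Z}B_{kn}$; for $\mathfrak m\in\mathcal O$, $(\mathfrak m)=\mathfrak m\Lambda_n=\Lambda_n\mathfrak m$ is a two-sided ideal of $\Lambda_n$. *)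

From HB Require Import structures.
From mathcomp Require Import all_boot all_order all_algebra.
Set Implicit Arguments. Unset Strict Implicit. Unset Printing Implicit Defensive.
Import Order.TTheory GRing.Theory Num.Theory.
Local Open Scope ring_scope.

Section BR.
Variable R : comNzRingType.

Definition is_ideal (P : R -> Prop) : Prop :=
  [/\ P 0, (forall x y, P x -> P y -> P (x + y)) & (forall r x, P x -> P (r * x))].

Definition is_prime_ideal (P : R -> Prop) : Prop :=
  [/\ is_ideal P, ~ P 1 & (forall x y, P (x * y) -> P x \/ P y)].

Definition is_max_ideal (P : R -> Prop) : Prop :=
  [/\ is_ideal P, ~ P 1 &
      (forall Q, is_ideal Q -> (forall x, P x -> Q x) ->
         (forall x, Q x <-> P x) \/ (forall x, Q x))].

Definition img (f : R -> R) (P : R -> Prop) : R -> Prop :=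
  fun x => exists y, P y /\ x = f y.

Definition iprod (P Q : R -> Prop) : R -> Prop :=
  fun x => exists l : seq (R * R),
    (forall pq, pq \in l -> P pq.1 /\ Q pq.2) /\ x = \sum_(pq <- l) pq.1 * pq.2.

Definition setR : R -> Prop := fun _ => True.

Variables (s si : R -> R).   (* sigma and sigma^{-1} *)

Definition sigz (z : int) : R -> R :=
  match z with Posz k => iter k s | Negz k => iter k.+1 si end.

Variables (H J : R -> Prop).

(* I^{(z)} : I^{(0)} = R, I^{(k)} = J sigma(J) ... sigma^{k-1}(J) (k >= 1),
   I^{(-k)} = sigma^{-1}(H) sigma^{-2}(H) ... sigma^{-k}(H) (k >= 1). *)
Definition BR_I (z : int) : R -> Prop :=
  match z with
  | Posz k => foldr (fun j acc => iprod (img (sigz (Posz j)) J) acc) setR (iota 0 k)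
  | Negz k => foldr (fun j acc => iprod (img (sigz (Negz j)) H) acc) setR (iota 0 k.+1)
  end.

(* ---------- skew Laurent ring R[t,t^{-1};sigma] ----------
   An element is represented by a finite formal sum [:: (i_1, a_1); ...]
   standing for sum a_j t^{i_j}; two representations are equal iff
   they have the same coefficients. *)
Definition lcoef (x : seq (int * R)) (i : int) : R :=
  \sum_(p <- x | p.1 == i) p.2.

Definition leqv (x y : seq (int * R)) : Prop := forall i, lcoef x i = lcoef y i.

(* (a t^i)(b t^j) = a sigma^i(b) t^{i+j} *)
Definition lmul (x y : seq (int * R)) : seq (int * R) :=
  [seq (p.1 + q.1, p.2 * sigz p.1 q.2) | p <- x, q <- y].

Variable n : nat.

(* x (termwise) represents an element of Lambda_n = (+)_k I^{(kn)} t^{kn} *)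
Definition inLam (x : seq (int * R)) : Prop :=
  forall p, p \in x -> (exists k : int, p.1 = k * n%:Z) /\ BR_I p.1 p.2.

Variable m : R -> Prop.

(* elements of the two-sided ideal (m) = m Lambda_n *)
Definition in_mLam (x : seq (int * R)) : Prop :=
  inLam x /\ exists l : seq (R * seq (int * R)),
    (forall p, p \in l -> m p.1 /\ inLam p.2) /\
    leqv x (flatten [seq lmul [:: (0%:Z, p.1)] p.2 | p <- l]).

Definition LamMod (N : zmodType) (rho : seq (int * R) -> N -> N) : Prop :=
  [/\ (forall x y, inLam x -> inLam y -> leqv x y -> forall v, rho x v = rho y v),
      (forall x, inLam x -> forall u v, rho x (u + v) = rho x u + rho x v),
      (forall x y, inLam x -> inLam y -> forall v, rho (x ++ y) v = rho x v + rho y v),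
      (forall x y, inLam x -> inLam y -> forall v, rho (lmul x y) v = rho x (rho y v))
    & (forall v, rho [:: (0%:Z, 1)] v = v)].

Definition LamModQ (N : zmodType) (rho : seq (int * R) -> N -> N) : Prop :=
  LamMod rho /\ (forall x, in_mLam x -> forall v, rho x v = 0).

(* act : R -> End(N) makes N an R/m-vector space, i.e. an R-module killed by m *)
Definition RmodVS (N : zmodType) (act : R -> N -> N) : Prop :=
  [/\ (forall r u v, act r (u + v) = act r u + act r v),
      (forall r r' v, act (r + r') v = act r v + act r' v),
      (forall r r' v, act (r * r') v = act r (act r' v)),
      (forall v, act 1 v = v)
    & (forall r v, m r -> act r v = 0)].

Definition RAut (N : zmodType) (act : R -> N -> N) (theta thetai : N -> N) : Prop :=
  [/\ (forall u v, theta (u + v) = theta u + theta v),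
      (forall r v, theta (act r v) = act r (theta v)),
      cancel theta thetai & cancel thetai theta].

Definition theta_rel (N : zmodType) (rho : seq (int * R) -> N -> N)
    (act : R -> N -> N) (theta thetai : N -> N) : Prop :=
  (forall a, BR_I n%:Z a -> forall v, rho [:: (n%:Z, a)] v = act a (theta v)) /\
  (forall b, BR_I (- n%:Z) b -> forall v, rho [:: (- n%:Z, b)] v = act b (thetai v)).

Definition simple_mod (N : zmodType) (rho : seq (int * R) -> N -> N) : Prop :=
  (exists v : N, v <> 0) /\
  forall P : N -> Prop,
    P 0 -> (forall u v, P u -> P v -> P (u + v)) ->
    (forall x v, inLam x -> P v -> P (rho x v)) ->
    (forall v, P v -> v = 0) \/ (forall v, P v).

Definition theta_irred (N : zmodType) (act : R -> N -> N) (theta : N -> N) : Prop :=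
  (exists v : N, v <> 0) /\
  forall P : N -> Prop,
    P 0 -> (forall u v, P u -> P v -> P (u + v)) ->
    (forall r v, P v -> P (act r v)) ->
    (forall v, P v -> P (theta v)) ->
    (forall v, P v -> v = 0) \/ (forall v, P v).

End BR.

Section Orbit.
Variable R : comNzRingType.
Variables (s : R -> R) (H J : R -> Prop).

(* a maximal ideal mm is a break if sigma(mm) is in S(B) *)
Definition is_break (mm : R -> Prop) : Prop :=
  is_max_ideal mm /\
  (is_prime_ideal (img s mm) /\ forall x, iprod H J x -> img s mm x).

(* the sigma-orbit of m has (at least, hence with sigma^n = id exactly) n elements *)
Definition orbit_size_n (n : nat) (m : R -> Prop) : Prop :=
  forall i j, (i < j < n)%N ->
    ~ (forall x, img (iter i s) m x <-> img (iter j s) m x).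
End Orbit.

(* Since no [sigma^j(m)] is a break, [J] and [H] are not contained in any ideal of the
   orbit of [m]; as [m] is prime, the products [I^(n)] and [I^(-n)] then contain elements
   [e] and [f] congruent to [1] modulo [m].  Modulo [(m)], [e t^n] and [f t^-n] are inverse
   to each other, commute with [R] because [sigma^n = id], and [a t^n = a (e t^n)]; this
   gives (1) with [theta = e t^n], and shows that a [Lambda_n/(m)]-submodule is just a
   subspace stable under [theta] and [theta^-1].  Conversely, letting [a t^(kn)] act by
   [a theta^k] gives (2).  For (3) it remains to see that in a simple module every
   [theta]-stable subspace is [theta^-1]-stable: either [theta = -1], or [1 + theta] is
   onto, and then [w = (1 + theta) y] with [y] in the cyclic module of [w] yields a
   polynomial relation for [theta] on [w] with an invertible coefficient, from which
   [theta^-1 w] is a polynomial in [theta] applied to [w]. *)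

From HB Require Import structures.
From mathcomp Require Import all_boot all_order all_algebra.
From mathcomp Require Import zify.
From Stdlib Require Import Classical.
Set Implicit Arguments. Unset Strict Implicit. Unset Printing Implicit Defensive.
Import GRing.Theory.
Local Open Scope ring_scope.

Lemma iter_can (T : Type) (f g : T -> T) k : cancel g f -> cancel (iter k g) (iter k f).
Proof. by move=> gf; elim: k => [//|k ih] x; rewrite iterS iterSr ih gf. Qed.

Lemma iter_morph1 (T : Type) (f g : T -> T) k :
  {morph f : x / g x} -> {morph iter k f : x / g x}.
Proof. by move=> fg; elim: k => [//|k ih] x; rewrite !iterS ih fg. Qed.

Lemma iter_morph2 (T : Type) (f : T -> T) (op : T -> T -> T) k :
  {morph f : x y / op x y} -> {morph iter k f : x y / op x y}.
Proof. by move=> fop; elim: k => [//|k ih] x y; rewrite !iterS ih fop. Qed.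

Section AdditiveMaps.
Variables (U V : zmodType) (f : U -> V).
Hypothesis fD : {morph f : u v / u + v}.

Lemma morphD0 : f 0 = 0.
Proof. by apply: (addrI (f 0)); rewrite -fD !addr0. Qed.

Lemma morphDN u : f (- u) = - f u.
Proof. by apply: (addrI (f u)); rewrite -fD !subrr morphD0. Qed.

Lemma morphD_sum I (r : seq I) (P : pred I) (F : I -> U) :
  f (\sum_(i <- r | P i) F i) = \sum_(i <- r | P i) f (F i).
Proof. exact: (big_morph f fD morphD0). Qed.
End AdditiveMaps.

Section Ideals.
Variable R : comNzRingType.
Implicit Types (P Q : R -> Prop) (x y r : R).

Lemma ideal0 P : is_ideal P -> P 0. Proof. by case. Qed.
Lemma idealD P x y : is_ideal P -> P x -> P y -> P (x + y). Proof. by case=> _ + _; apply. Qed.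
Lemma idealMl P r x : is_ideal P -> P x -> P (r * x). Proof. by case=> _ _; apply. Qed.
Lemma idealMr P r x : is_ideal P -> P x -> P (x * r).
Proof. by rewrite mulrC; apply: idealMl. Qed.
Lemma idealN P x : is_ideal P -> P x -> P (- x).
Proof. by rewrite -mulN1r; apply: idealMl. Qed.
Lemma idealB P x y : is_ideal P -> P x -> P y -> P (x - y).
Proof. by move=> hP hx hy; apply: idealD => //; apply: idealN. Qed.

Lemma ideal_sum P (I : eqType) (r : seq I) (F : I -> R) :
  is_ideal P -> (forall i, i \in r -> P (F i)) -> P (\sum_(i <- r) F i).
Proof.
move=> hP; elim: r => [|i r ih] hF; first by rewrite big_nil; apply: ideal0.
rewrite big_cons; apply: idealD => //; first by apply: hF; rewrite mem_head.
by apply: ih => j hj; apply: hF; rewrite in_cons hj orbT.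
Qed.

Lemma proper_ideal_unit P u v : is_ideal P -> ~ P 1 -> v * u = 1 -> ~ P u.
Proof. by move=> hP P1 vu Pu; apply: P1; rewrite -vu; apply: idealMl. Qed.

Lemma eq1mod_mul P x y : is_ideal P -> P (x - 1) -> P (y - 1) -> P (x * y - 1).
Proof.
move=> hP hx hy.
have -> : x * y - 1 = x * (y - 1) + (x - 1) by rewrite mulrBr mulr1 addrA subrK.
by apply: idealD => //; apply: idealMl.
Qed.

(* The ideal [P + R a] is everything, so [c a = 1] modulo [P] for some [c]. *)
Lemma max_ideal_invmod P a : is_max_ideal P -> ~ P a -> exists c, P (c * a - 1).
Proof.
case=> hP P1 hmax Pa.
pose Q x := exists b r, P b /\ x = b + r * a.
have hQ : is_ideal Q.
  split.
  - by exists 0, 0; rewrite mul0r addr0; split=> //; apply: ideal0.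
  - move=> _ _ [b [r [Pb ->]]] [b' [r' [Pb' ->]]]; exists (b + b'), (r + r').
    by split; [apply: idealD | rewrite mulrDl addrACA].
  - move=> r _ [b [r' [Pb ->]]]; exists (r * b), (r * r').
    by split; [apply: idealMl | rewrite mulrDr mulrA].
have PQ x : P x -> Q x by move=> Px; exists x, 0; rewrite mul0r addr0.
case: (hmax Q hQ PQ) => [QP | Qall].
  by case: Pa; apply/QP; exists 0, 1; rewrite add0r mul1r; split=> //; apply: ideal0.
have [b [r [Pb e1]]] := Qall 1; exists r.
by rewrite e1 opprD addrCA subrr addr0; apply: idealN.
Qed.

Lemma max_ideal_prime P : is_max_ideal P -> is_prime_ideal P.
Proof.
move=> hm; have [hP P1 _] := hm; split=> // x y Pxy.
case: (classic (P x)) => [|Px]; [by left | right].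
have [c Pcx] := max_ideal_invmod hm Px.
have -> : y = c * (x * y) - (c * x - 1) * y by rewrite mulrBl mul1r mulrA subKr.
by apply: idealB => //; [apply: idealMl | apply: idealMr].
Qed.

Lemma max_idealM P x y : is_max_ideal P -> P (x * y) -> P x \/ P y.
Proof. by move=> /max_ideal_prime[_ _]; apply. Qed.
End Ideals.

Section RingAut.
Variable R : comNzRingType.
Implicit Types (f g : R -> R) (P : R -> Prop).

Definition ring_aut f g :=
  [/\ {morph f : a b / a + b}, {morph f : a b / a * b}, f 1 = 1, cancel f g & cancel g f].

Lemma ring_aut_sym f g : ring_aut f g -> ring_aut g f.
Proof.
case=> fD fM f1 fg gf; split=> //.
- by move=> a b; apply: (can_inj fg); rewrite fD !gf.
- by move=> a b; apply: (can_inj fg); rewrite fM !gf.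
- by apply: (can_inj fg); rewrite f1 gf.
Qed.

Lemma ring_aut_iter f g k : ring_aut f g -> ring_aut (iter k f) (iter k g).
Proof.
case=> fD fM f1 fg gf; split; [exact: iter_morph2 | exact: iter_morph2 | | exact: iter_can..].
by elim: k => [//|k ih]; rewrite iterS ih f1.
Qed.

Lemma sigz_ring_aut s si z : ring_aut s si -> exists g, ring_aut (sigz s si z) g.
Proof.
case: z => j hs /=; first by exists (iter j si); apply: ring_aut_iter.
by exists (iter j.+1 s); apply/ring_aut_iter/ring_aut_sym.
Qed.

Lemma img_ideal f g P : ring_aut f g -> is_ideal P -> is_ideal (img f P).
Proof.
case=> fD fM _ _ gf hP; split.
- by exists 0; split; [apply: ideal0 | rewrite (morphD0 fD)].
- by move=> _ _ [a [Pa ->]] [b [Pb ->]]; exists (a + b); split; [apply: idealD | rewrite fD].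
- by move=> r _ [a [Pa ->]]; exists (g r * a); split; [apply: idealMl | rewrite fM gf].
Qed.

Lemma img_max_ideal f g P : ring_aut f g -> is_max_ideal P -> is_max_ideal (img f P).
Proof.
move=> hf [hP P1 hmax]; have [fD fM f1 fg gf] := hf; split.
- exact: img_ideal hf hP.
- case=> y [Py e1]; apply: P1.
  by have -> : 1 = y by apply: (can_inj fg); rewrite f1 -e1.
- move=> Q hQ PQ; pose Q' x := Q (f x).
  have hQ' : is_ideal Q'.
    split; rewrite /Q'.
    + by rewrite (morphD0 fD); apply: ideal0.
    + by move=> x y Qx Qy; rewrite fD; apply: idealD.
    + by move=> r x Qx; rewrite fM; apply: idealMl.
  case: (hmax Q' hQ' (fun x Px => PQ _ (ex_intro _ x (conj Px erefl)))) => [e | e].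
  + left=> x; split; last exact: PQ.
    by move=> Qx; exists (g x); split; [apply/e; rewrite /Q' gf | rewrite gf].
  + by right=> x; rewrite -(gf x); apply: e.
Qed.
End RingAut.

Section ProductIdeals.
Variable R : comNzRingType.
Implicit Types (P Q : R -> Prop).

Lemma iprod_ideal P Q : is_ideal P -> is_ideal (iprod P Q).
Proof.
move=> hP; split.
- by exists [::]; rewrite big_nil.
- move=> _ _ [l1 [h1 ->]] [l2 [h2 ->]]; exists (l1 ++ l2); rewrite big_cat; split=> // pq.
  by rewrite mem_cat => /orP[/h1 | /h2].
- move=> r _ [l [h ->]]; exists [seq (r * pq.1, pq.2) | pq <- l]; split.
  + by move=> _ /mapP[pq /h[h1 h2] ->]; split=> //; apply: idealMl.
  + by rewrite big_map mulr_sumr; apply: eq_bigr => pq _; rewrite mulrA.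
Qed.

Lemma iprodS P Q Q' : (forall x, Q x -> Q' x) -> forall x, iprod P Q x -> iprod P Q' x.
Proof. by move=> QQ' x [l [h ->]]; exists l; split=> // pq /h[h1 /QQ']. Qed.

Lemma iprodM P Q x y : P x -> Q y -> iprod P Q (x * y).
Proof.
move=> Px Qy; exists [:: (x, y)]; rewrite big_seq1; split=> // pq.
by rewrite mem_seq1 => /eqP ->.
Qed.

Definition iprods (F : nat -> R -> Prop) (l : seq nat) Q : R -> Prop :=
  foldr (fun j acc => iprod (F j) acc) Q l.

Lemma iprodsS F l Q Q' : (forall x, Q x -> Q' x) -> forall x, iprods F l Q x -> iprods F l Q' x.
Proof. by move=> QQ'; elim: l => [|j l ih] //=; apply: iprodS. Qed.

Lemma iprods_ideal F l : (forall j, is_ideal (F j)) -> is_ideal (iprods F l (@setR R)).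
Proof. by case: l => [|j l] // hF; apply: iprod_ideal. Qed.

Lemma iprods_cat F l1 l2 x : iprods F (l1 ++ l2) (@setR R) x -> iprods F l1 (@setR R) x.
Proof. by rewrite /iprods foldr_cat; apply: iprodsS. Qed.

Lemma iprods_not_max F l m : is_max_ideal m ->
  (forall j, j \in l -> exists2 y, F j y & ~ m y) -> exists2 a, iprods F l (@setR R) a & ~ m a.
Proof.
move=> hm; elim: l => [|j l ih] hF; first by exists 1; case: hm.
have [a la ma] := ih (fun i li => hF i (mem_behead (li : i \in behead (j :: l)))).
have [y Fy my] := hF j (mem_head _ _).
by exists (y * a); [apply: iprodM | case/(max_idealM hm)].
Qed.
End ProductIdeals.

Section BRIdeals.
Variable R : comNzRingType.
Variables (s si : R -> R) (H J : R -> Prop).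
Hypotheses (hs : ring_aut s si) (hH : is_ideal H) (hJ : is_ideal J).

Lemma BR_I_ideal z : is_ideal (BR_I s si H J z).
Proof.
have imgs z' P : is_ideal P -> is_ideal (img (sigz s si z') P).
  by have [g hg] := sigz_ring_aut z' hs; apply: img_ideal hg.
case: z => k.
- by apply: (@iprods_ideal _ (fun j => img (sigz s si (Posz j)) J)) => j; apply: imgs.
- have := @iprods_ideal _ (fun j => img (sigz s si (Negz j)) H) (iota 0 k.+1).
  by apply=> j; apply: imgs.
Qed.

Lemma BR_I_posD a b x : BR_I s si H J (Posz (a + b)) x -> BR_I s si H J (Posz a) x.
Proof. by rewrite /BR_I iotaD; apply: iprods_cat. Qed.

Lemma BR_I_negD a b x : BR_I s si H J (Negz (a + b)) x -> BR_I s si H J (Negz a) x.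
Proof. by rewrite /BR_I -addSn iotaD; apply: iprods_cat. Qed.
End BRIdeals.

Lemma oppz_nat_Negz (n : nat) : (0 < n)%N -> - (n%:Z) = Negz n.-1.
Proof. by case: n => // n _; rewrite NegzE. Qed.

Section UnitsModMax.
Variable R : comNzRingType.
Variables (s si : R -> R) (H J : R -> Prop).
Hypotheses (hs : ring_aut s si) (hH : is_ideal H) (hJ : is_ideal J).
Variable m : R -> Prop.
Hypothesis m_max : is_max_ideal m.
Hypothesis no_break : forall j : nat, ~ is_break s H J (img (iter j s) m).

(* [sigma^(j+1)(m)] is maximal, hence prime, so it can contain [H J] only if it contains
   [H] or [J]. *)
Lemma no_break_not_sub j :
  (exists2 y, J y & ~ img s (img (iter j s) m) y) /\
  (exists2 y, H y & ~ img s (img (iter j s) m) y).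
Proof.
have mj_max := img_max_ideal (ring_aut_iter j hs) m_max.
have mj1_max := img_max_ideal hs mj_max.
have [mj1_ideal _ _] := mj1_max.
suff HJ_sub : (forall y, J y -> img s (img (iter j s) m) y) \/
              (forall y, H y -> img s (img (iter j s) m) y) ->
              is_break s H J (img (iter j s) m).
  split; apply: NNPP => hn; apply: (no_break (j := j)); apply: HJ_sub.
  - by left=> y Jy; apply: NNPP => ny; apply: hn; exists y.
  - by right=> y Hy; apply: NNPP => ny; apply: hn; exists y.
move=> HJ; split=> //; split; first exact: max_ideal_prime.
move=> _ [l [hl ->]]; apply: ideal_sum => // pq /hl[Hp Jq].
case: HJ => [Jsub | Hsub]; [apply: idealMl => //; exact: Jsub | apply: idealMr => //; exact: Hsub].
Qed.

Variable n : nat.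
Hypothesis s_n : forall x, iter n s x = x.

Lemma BR_I_pos_eq1mod : exists2 e, BR_I s si H J n%:Z e & m (e - 1).
Proof.
have [a Ia ma] : exists2 a, BR_I s si H J n%:Z a & ~ m a.
  apply: (@iprods_not_max _ (fun j => img (sigz s si (Posz j)) J)) => // j.
  rewrite mem_iota add0n => /andP[_ jn].
  have [[y Jy my] _] := no_break_not_sub (n - j.+1).
  exists (iter j s y); first by exists y.
  move=> mjy; apply: my; exists (iter (n - j.+1) s (iter j s y)).
  split; first by exists (iter j s y).
  by rewrite -iterS -iterD subnSK // subnK ?s_n // ltnW.
have [c mca] := max_ideal_invmod m_max ma.
by exists (c * a) => //; apply: idealMl => //; apply: BR_I_ideal.
Qed.

Hypothesis n_gt0 : (0 < n)%N.

Lemma BR_I_neg_eq1mod : exists2 f, BR_I s si H J (- n%:Z) f & m (f - 1).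
Proof.
have [_ _ _ _ si_s] := hs.
rewrite oppz_nat_Negz //.
have [a Ia ma] : exists2 a, BR_I s si H J (Negz n.-1) a & ~ m a.
  have := @iprods_not_max _ (fun j => img (sigz s si (Negz j)) H) (iota 0 n.-1.+1) m m_max.
  apply=> j _.
  have [_ [y Hy my]] := no_break_not_sub j.
  exists (iter j.+1 si y); first by exists y.
  move=> mjy; apply: my; exists (iter j s (iter j.+1 si y)).
  split; first by exists (iter j.+1 si y).
  by rewrite -iterS (iter_can _ si_s).
have [c mca] := max_ideal_invmod m_max ma.
by exists (c * a) => //; apply: idealMl => //; apply: BR_I_ideal.
Qed.
End UnitsModMax.

Section FormalSums.
Variable R : comNzRingType.
Implicit Types (x y : seq (int * R)) (z : int) (a : R).

Lemma lcoef1 z a i : lcoef [:: (z, a)] i = if z == i then a else 0.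
Proof. by rewrite /lcoef big_cons big_nil /=; case: (z == i); rewrite ?addr0. Qed.

Lemma lcoef_cat x y i : lcoef (x ++ y) i = lcoef x i + lcoef y i.
Proof. by rewrite /lcoef big_cat. Qed.

Lemma sum_by_lcoef (N : zmodType) (F : int -> R -> N) (S : seq int) x :
  (forall i, {morph F i : a b / a + b}) -> uniq S -> (forall p, p \in x -> p.1 \in S) ->
  \sum_(p <- x) F p.1 p.2 = \sum_(i <- S) F i (lcoef x i).
Proof.
move=> FD uS; elim: x => [|[z a] x ih] xS.
  by rewrite big_nil big1 // => i _; rewrite /lcoef big_nil (morphD0 (FD i)).
rewrite big_cons ih => [|q xq]; last by apply: xS; rewrite in_cons xq orbT.
under [RHS]eq_bigr => i _ do rewrite -cat1s lcoef_cat FD lcoef1.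
rewrite big_split /=; congr (_ + _).
rewrite (bigD1_seq z) ?(xS (z, a)) ?mem_head //= eqxx big1 ?addr0 // => i /negbTE.
by rewrite eq_sym => ->; rewrite (morphD0 (FD i)).
Qed.

Variables (s si : R -> R) (n : nat).
Hypotheses (hs : ring_aut s si) (s_n : forall r, iter n s r = r).

Lemma sigz_dvd_id z r : (n%:Z %| z)%Z -> sigz s si z r = r.
Proof.
have [_ _ _ s_si si_s] := hs.
have s_qn q : iter (q * n) s r = r by elim: q => [//|q ih]; rewrite mulSn iterD s_n ih.
case: z => j /dvdnP[q /= e]; first by rewrite /= e s_qn.
by rewrite -iterS e -{1}(s_qn q) (iter_can _ s_si).
Qed.
End FormalSums.

Section AutModule.
Variable R : comNzRingType.
Variable m : R -> Prop.
Variables (N : zmodType) (act : R -> N -> N) (theta thetai : N -> N).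
Hypotheses (hact : RmodVS m act) (haut : RAut act theta thetai).

Lemma actD r : {morph act r : u v / u + v}. Proof. by move=> u v; case: hact. Qed.
Lemma actDr r r' v : act (r + r') v = act r v + act r' v. Proof. by case: hact. Qed.
Lemma actM r r' v : act (r * r') v = act r (act r' v). Proof. by case: hact. Qed.
Lemma act1 v : act 1 v = v. Proof. by case: hact. Qed.
Lemma act_max r v : m r -> act r v = 0. Proof. by case: hact => _ _ _ _; apply. Qed.

Lemma act0r v : act 0 v = 0.
Proof. exact: (morphD0 (fun r r' => actDr r r' v)). Qed.

Lemma actNr r v : act (- r) v = - act r v.
Proof. exact: (morphDN (fun r r' => actDr r r' v)). Qed.

Lemma act_eq1mod r v : m (r - 1) -> act r v = v.
Proof. by move=> mr; rewrite -[r](subrK 1) actDr act_max // add0r act1. Qed.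

Lemma thetaD : {morph theta : u v / u + v}. Proof. by move=> u v; case: haut. Qed.
Lemma theta_act r v : theta (act r v) = act r (theta v). Proof. by case: haut. Qed.
Lemma thetaK : cancel theta thetai. Proof. by case: haut. Qed.
Lemma thetaiK : cancel thetai theta. Proof. by case: haut. Qed.

Lemma thetaiD : {morph thetai : u v / u + v}.
Proof. by move=> u v; apply: (can_inj thetaK); rewrite thetaD !thetaiK. Qed.

Lemma thetai_act r v : thetai (act r v) = act r (thetai v).
Proof. by apply: (can_inj thetaK); rewrite theta_act !thetaiK. Qed.

Definition theta_pow (z : int) : N -> N :=
  match z with Posz k => iter k theta | Negz k => iter k.+1 thetai end.

Lemma theta_pow_morphD z : {morph theta_pow z : u v / u + v}.
Proof.
by case: z => k; apply: iter_morph2; [apply: thetaD | apply: thetaiD].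
Qed.

Lemma theta_pow_act z r v : theta_pow z (act r v) = act r (theta_pow z v).
Proof.
by case: z => k; apply: (iter_morph1 (g := act r)) => w;
  [exact: theta_act | exact: thetai_act].
Qed.

Lemma theta_powS z v : theta_pow (z + 1) v = theta (theta_pow z v).
Proof.
case: z => [k|[|k]]; first by have -> : Posz k + 1 = Posz k.+1 by lia.
- by rewrite /= thetaiK.
- have -> : Negz k.+1 + 1 = Negz k by lia.
  by rewrite [in RHS]/= thetaiK.
Qed.

Lemma theta_powD w z v : theta_pow (w + z) v = theta_pow w (theta_pow z v).
Proof.
have theta_powP z' v' : theta_pow (z' - 1) v' = thetai (theta_pow z' v').
  by rewrite -{2}(subrK 1 z') theta_powS thetaK.
case: w => k; elim: k => [|k ih]; first by rewrite add0r.
- have -> : Posz k.+1 + z = (Posz k + z) + 1 by lia.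
  by rewrite theta_powS ih.
- have -> : Negz 0 + z = z - 1 by lia.
  by rewrite theta_powP.
- have -> : Negz k.+1 + z = (Negz k + z) - 1 by lia.
  by rewrite theta_powP ih.
Qed.
End AutModule.

Section ThetaModule.
Variable R : comNzRingType.
Variables (s si : R -> R) (H J : R -> Prop).
Hypothesis hs : ring_aut s si.
Variable n : nat.
Hypotheses (n_gt0 : (0 < n)%N) (s_n : forall r, iter n s r = r).
Variable m : R -> Prop.
Variables (N : zmodType) (act : R -> N -> N) (theta thetai : N -> N).
Hypotheses (hact : RmodVS m act) (haut : RAut act theta thetai).

Local Notation theta_pow := (theta_pow theta thetai).

Definition rho_theta (x : seq (int * R)) (v : N) : N :=
  \sum_(p <- x) act p.2 (theta_pow (p.1 %/ n)%Z v).

Lemma rho_theta1 z a v : rho_theta [:: (z, a)] v = act a (theta_pow (z %/ n)%Z v).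
Proof. by rewrite /rho_theta big_seq1. Qed.

Lemma rho_theta_leqv x y v : leqv x y -> rho_theta x v = rho_theta y v.
Proof.
move=> xy; pose F i a := act a (theta_pow (i %/ n)%Z v).
have FD i : {morph F i : a b / a + b} by move=> a b; apply: (actDr hact).
have uS := undup_uniq [seq p.1 | p <- x ++ y].
rewrite /rho_theta (sum_by_lcoef FD uS) => [|p xp]; last first.
  by rewrite mem_undup map_f // mem_cat xp.
rewrite (sum_by_lcoef FD uS) => [|p yp]; last by rewrite mem_undup map_f // mem_cat yp orbT.
by apply: eq_bigr => i _; rewrite xy.
Qed.

Lemma rho_theta_morphD x : {morph rho_theta x : u v / u + v}.
Proof.
move=> u v; rewrite /rho_theta -big_split; apply: eq_bigr => p _.
by rewrite (theta_pow_morphD haut) (actD hact).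
Qed.

Lemma rho_theta_cat x y v : rho_theta (x ++ y) v = rho_theta x v + rho_theta y v.
Proof. by rewrite /rho_theta big_cat. Qed.

Lemma n_neq0 : n%:Z != 0. Proof. by rewrite eqz_nat -lt0n. Qed.

(* The degrees of an element of [Lambda_n] are multiples of [n], where [sigma] acts trivially. *)
Lemma rho_theta_lmul x y v :
  inLam s si H J n x -> rho_theta (lmul s si x y) v = rho_theta x (rho_theta y v).
Proof.
move=> hx; rewrite /rho_theta /lmul big_allpairs_dep /= big_seq [RHS]big_seq.
apply: eq_bigr => p xp.
rewrite (morphD_sum (theta_pow_morphD haut _)) (morphD_sum (actD hact _)); apply: eq_bigr => q _.
have [[k ->] _] := hx p xp.
rewrite (sigz_dvd_id hs s_n) ?dvdz_mull //.
by rewrite divzMDl ?n_neq0 // mulzK ?n_neq0 // (theta_powD haut) (theta_pow_act haut) (actM hact).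
Qed.

Lemma rho_theta_mLam x v : in_mLam s si H J n m x -> rho_theta x v = 0.
Proof.
case=> _ [l [hl xl]]; rewrite (rho_theta_leqv v xl) /rho_theta big_flatten big_map /=.
apply: big1_seq => p /andP[_ lp]; have [mp _] := hl p lp.
rewrite /lmul big_allpairs_dep /= big_seq1.
by apply: big1 => q _; rewrite (actM hact) (act_max hact).
Qed.

Lemma theta_LamModQ : exists rho : seq (int * R) -> N -> N,
  [/\ LamModQ s si H J n m rho,
      (forall r v, rho [:: (0%:Z, r)] v = act r v) &
      theta_rel s si H J n rho act theta thetai].
Proof.
exists rho_theta; split.
- split; last by move=> x mx v; apply: rho_theta_mLam.
  split.
  + by move=> x y _ _ xy v; apply: rho_theta_leqv.
  + by move=> x _; apply: rho_theta_morphD.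
  + by move=> x y _ _ v; apply: rho_theta_cat.
  + by move=> x y hx _ v; apply: rho_theta_lmul.
  + by move=> v; rewrite rho_theta1 div0z (act1 hact).
- by move=> r v; rewrite rho_theta1 div0z.
- split=> [a _ v | b _ v]; rewrite rho_theta1.
  + by rewrite -{1}(mul1r n%:Z) mulzK ?n_neq0.
  + by rewrite -mulN1r mulzK ?n_neq0.
Qed.
End ThetaModule.

Section SimpleAutModule.
Variable R : comNzRingType.
Variable m : R -> Prop.
Hypothesis m_max : is_max_ideal m.
Variables (N : zmodType) (act : R -> N -> N) (theta thetai : N -> N).
Hypotheses (hact : RmodVS m act) (haut : RAut act theta thetai).
Hypothesis N_simple : forall P : N -> Prop,
  P 0 -> (forall u v, P u -> P v -> P (u + v)) -> (forall r v, P v -> P (act r v)) ->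
  (forall v, P v -> P (theta v)) -> (forall v, P v -> P (thetai v)) ->
  (forall v, P v -> v = 0) \/ (forall v, P v).

(* Polynomials in [theta] are represented by their coefficient lists; [eval_opp1] evaluates
   at [-1]. *)
Fixpoint peval (l : seq R) (y : N) : N :=
  if l is c :: l' then act c y + peval l' (theta y) else 0.

Fixpoint eval_opp1 (l : seq R) : R := if l is c :: l' then c - eval_opp1 l' else 0.

Fixpoint coef_add (l1 l2 : seq R) : seq R :=
  match l1, l2 with
  | [::], _ => l2
  | _, [::] => l1
  | a :: l1', b :: l2' => (a + b) :: coef_add l1' l2'
  end.

Lemma peval_theta l y : theta (peval l y) = peval l (theta y).
Proof.
elim: l y => [|c l ih] y /=; first exact: (morphD0 (thetaD haut)).
by rewrite (thetaD haut) (theta_act haut) ih.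
Qed.

Lemma peval_thetai l y : thetai (peval l y) = peval l (thetai y).
Proof. by apply: (can_inj (thetaK haut)); rewrite (thetaiK haut) peval_theta (thetaiK haut). Qed.

Lemma peval_scale r l y : peval [seq r * c | c <- l] y = act r (peval l y).
Proof.
elim: l y => [|c l ih] y /=; first by rewrite (morphD0 (actD hact r)).
by rewrite ih (actD hact) (actM hact).
Qed.

Lemma peval_add l1 l2 y : peval (coef_add l1 l2) y = peval l1 y + peval l2 y.
Proof.
elim: l1 l2 y => [|a l1 ih] [|b l2] y /=; rewrite ?add0r ?addr0 //.
by rewrite ih (actDr hact) addrACA.
Qed.

Lemma peval_shift k l y : peval (nseq k 0 ++ l) y = peval l (iter k theta y).
Proof. by elim: k y => [//|k ih] y; rewrite /= (act0r hact) add0r ih -iterSr. Qed.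

Lemma eval_opp1_scale r l : eval_opp1 [seq r * c | c <- l] = r * eval_opp1 l.
Proof. by elim: l => [|c l ih] /=; rewrite ?mulr0 // ih mulrBr. Qed.

Lemma eval_opp1_add l1 l2 : eval_opp1 (coef_add l1 l2) = eval_opp1 l1 + eval_opp1 l2.
Proof.
elim: l1 l2 => [|a l1 ih] [|b l2] /=; rewrite ?add0r ?addr0 //.
by rewrite ih opprD addrACA.
Qed.

Lemma eval_opp1_shift k l : eval_opp1 (nseq k 0 ++ l) = (-1) ^+ k * eval_opp1 l.
Proof. by elim: k => [|k ih] /=; rewrite ?mul1r // ih sub0r exprS mulN1r mulNr. Qed.

(* A relation [q(theta) z = 0] with [q(-1)] a unit mod [m] has a coefficient that is a unit;
   dividing by the lowest such one expresses [theta^-1 z] as a polynomial in [theta] applied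
   to [z]. *)
Lemma thetai_peval_of_rel l z :
  peval l z = 0 -> ~ m (eval_opp1 l) -> exists l', thetai z = peval l' z.
Proof.
have m_ideal : is_ideal m by case: m_max.
elim: l z => [|c l ih] z /=; first by move=> _ []; apply: ideal0.
move=> lz ml; case: (classic (m c)) => [mc | mc].
  rewrite (act_max hact) // add0r in lz.
  have [|l' zl'] := ih _ lz; first by move=> ml'; apply: ml; apply: idealB.
  by exists l'; rewrite (thetaK haut) in zl'; rewrite {1}zl' peval_thetai (thetaK haut).
have [d mdc] := max_ideal_invmod m_max mc.
exists [seq - d * a | a <- l].
have cz : act c (thetai z) = - peval l z.
  have cz' : act c z = - peval l (theta z) by apply/eqP; rewrite -subr_eq0 opprK lz.
  by rewrite -(thetai_act haut) cz' (morphDN (thetaiD haut)) peval_thetai (thetaK haut).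
by rewrite peval_scale (actNr hact) -(morphDN (actD hact d)) -cz -(actM hact) (act_eq1mod hact).
Qed.

Lemma cyclic_span w : w <> 0 -> forall u, exists a l, u = peval l (iter a thetai w).
Proof.
move=> nw; pose span u := exists a l, u = peval l (iter a thetai w).
have [span0|//] : (forall u, span u -> u = 0) \/ (forall u, span u).
  apply: N_simple; first by exists 0%N, [::].
  - move=> _ _ [a [l ->]] [b [l' ->]].
    wlog ab : a b l l' / (a <= b)%N.
      by move=> hw; case: (leqP a b) => [|/ltnW] /hw //; rewrite addrC.
    exists b, (coef_add (nseq (b - a) 0 ++ l) l').
    rewrite peval_add peval_shift; congr (peval l _ + _).
    by rewrite -{2}(subnK ab) iterD (iter_can _ (thetaiK haut)).
  - by move=> r _ [a [l ->]]; exists a, [seq r * c | c <- l]; rewrite peval_scale.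
  - by move=> _ [a [l ->]]; exists a, (0 :: l); rewrite peval_theta /= (act0r hact) add0r.
  - by move=> _ [a [l ->]]; exists a.+1, l; rewrite peval_thetai.
by case: nw; apply: span0; exists 0%N, [:: 1]; rewrite /= (act1 hact) addr0.
Qed.

Lemma one_add_theta_cases :
  (forall v, v + theta v = 0) \/ (forall v, exists y, v = y + theta y).
Proof.
pose im v := exists y, v = y + theta y.
have : (forall v, im v -> v = 0) \/ (forall v, im v).
  apply: N_simple.
  - by exists 0; rewrite (morphD0 (thetaD haut)) addr0.
  - by move=> _ _ [y ->] [y' ->]; exists (y + y'); rewrite (thetaD haut) addrACA.
  - by move=> r _ [y ->]; exists (act r y); rewrite (actD hact) (theta_act haut).
  - by move=> _ [y ->]; exists (theta y); rewrite (thetaD haut).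
  - move=> _ [y ->]; exists (thetai y).
    by rewrite (thetaiD haut) (thetaiK haut) (thetaK haut) addrC.
by case=> [im0 | ]; [left=> y; apply: im0; exists y | right].
Qed.

Lemma sign_not_max k : ~ m (- (-1) ^+ k).
Proof.
have [m_ideal m1 _] := m_max; apply: (proper_ideal_unit (v := - (-1) ^+ k)) => //.
by rewrite mulrNN -exprMn mulrNN mulr1 expr1n.
Qed.

(* If [1 + theta] is onto, [w = (1 + theta) g(theta) theta^-a w] is a relation whose value
   at [-1] is [-(-1)^a]. *)
Lemma thetai_peval w : exists l, thetai w = peval l w.
Proof.
case: (classic (w = 0)) => [-> | nw].
  by exists [::]; rewrite /= (morphD0 (thetaiD haut)).
case: one_add_theta_cases => [theta_opp | theta_surj].
  exists [:: -1]; rewrite /= addr0 (actNr hact) (act1 hact).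
  by apply/eqP; rewrite -addr_eq0 -{2}(thetaiK haut w) theta_opp.
have [y wy] := theta_surj w; have [a [g yg]] := cyclic_span nw y.
set z := iter a thetai w in yg.
have wz : w = iter a theta z by rewrite /z (iter_can _ (thetaiK haut)).
pose l := coef_add (coef_add g (0 :: g)) [seq -1 * c | c <- nseq a 0 ++ [:: 1]].
have lz : peval l z = 0.
  rewrite !peval_add peval_scale peval_shift /= (act0r hact) add0r -peval_theta -yg.
  by rewrite (act1 hact) addr0 -wz -wy (actNr hact) (act1 hact) subrr.
have ml : ~ m (eval_opp1 l).
  rewrite !eval_opp1_add eval_opp1_scale eval_opp1_shift /= subr0 mulr1 sub0r addrN add0r.
  by rewrite mulN1r; apply: sign_not_max.
have [l' zl'] := thetai_peval_of_rel lz ml.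
exists l'; rewrite wz -(iter_morph1 _ (peval_theta l')) -zl'.
have thetaiC x : theta (thetai x) = thetai (theta x) by rewrite (thetaiK haut) (thetaK haut).
by rewrite (iter_morph1 _ thetaiC).
Qed.

Lemma theta_irred_of_simple (P : N -> Prop) :
  P 0 -> (forall u v, P u -> P v -> P (u + v)) -> (forall r v, P v -> P (act r v)) ->
  (forall v, P v -> P (theta v)) -> (forall v, P v -> v = 0) \/ (forall v, P v).
Proof.
move=> P0 PD Pact Ptheta; apply: N_simple => // v Pv.
have [l ->] := thetai_peval v.
by elim: l v Pv => [|c l ih] v Pv //=; apply: PD; [apply: Pact | apply/ih/Ptheta].
Qed.
End SimpleAutModule.

Section QuotientModule.
Variable R : comNzRingType.
Variables (s si : R -> R) (H J : R -> Prop).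
Hypotheses (hs : ring_aut s si) (hH : is_ideal H) (hJ : is_ideal J).
Variable n : nat.
Hypotheses (n_gt0 : (0 < n)%N) (s_n : forall r, iter n s r = r).
Variable m : R -> Prop.
Hypothesis m_max : is_max_ideal m.
Variables (N : zmodType) (rho : seq (int * R) -> N -> N).
Hypothesis hrho : LamModQ s si H J n m rho.

Local Notation BR := (BR_I s si H J).
Local Notation inL := (inLam s si H J n).
Local Notation act := (fun r => rho [:: (0%:Z, r)]).

Lemma inLam1 z a : (n%:Z %| z)%Z -> BR z a -> inL [:: (z, a)].
Proof. by move=> /dvdzP[k ->] Ba p; rewrite mem_seq1 => /eqP ->; split=> //; exists k. Qed.

Lemma inLam1_dvd z a : inL [:: (z, a)] -> (n%:Z %| z)%Z.
Proof. by move=> /(_ _ (mem_head _ _))[[k /= ->] _]; apply: dvdz_mull. Qed.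

Lemma inLam1_BR z a : inL [:: (z, a)] -> BR z a.
Proof. by move=> /(_ _ (mem_head _ _))[]. Qed.

Lemma inLam0 r : inL [:: (0%:Z, r)]. Proof. exact: inLam1 (dvdz0 _) _. Qed.

Lemma inLam_cons p x : inL (p :: x) -> inL [:: p] /\ inL x.
Proof.
move=> px; split=> q qx; apply: px; last by rewrite in_cons qx orbT.
by move: qx; rewrite mem_seq1 => /eqP ->; apply: mem_head.
Qed.

Lemma rho_leqv x y v : inL x -> inL y -> leqv x y -> rho x v = rho y v.
Proof. by case: hrho => -[h _ _ _ _] _ xL yL xy; apply: h. Qed.

Lemma rho_morphD x : inL x -> {morph rho x : u v / u + v}.
Proof. by case: hrho => -[_ h _ _ _] _ xL; apply: h. Qed.

Lemma rho_cat x y v : inL x -> inL y -> rho (x ++ y) v = rho x v + rho y v.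
Proof. by case: hrho => -[_ _ h _ _] _ xL yL; apply: h. Qed.

Lemma rho_lmul x y v : inL x -> inL y -> rho (lmul s si x y) v = rho x (rho y v).
Proof. by case: hrho => -[_ _ _ h _] _ xL yL; apply: h. Qed.

Lemma rho1 v : rho [:: (0%:Z, 1)] v = v.
Proof. by case: hrho => -[_ _ _ _ h] _. Qed.

Lemma rho_nil v : rho [::] v = 0.
Proof. by apply: (addrI (rho [::] v)); rewrite addr0 -rho_cat. Qed.

Lemma rho_cons p x v : inL (p :: x) -> rho (p :: x) v = rho [:: p] v + rho x v.
Proof. by move=> /inLam_cons[p1 x1]; rewrite -cat1s rho_cat. Qed.

Lemma rho_coefD z a b v : inL [:: (z, a)] -> inL [:: (z, b)] ->
  rho [:: (z, a + b)] v = rho [:: (z, a)] v + rho [:: (z, b)] v.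
Proof.
move=> za zb; rewrite -rho_cat //; apply: rho_leqv.
- by apply: inLam1 (inLam1_dvd za) _; apply: idealD (BR_I_ideal hs hH hJ z) _ _;
    [apply: inLam1_BR za | apply: inLam1_BR zb].
- by move=> p; rewrite mem_cat => /orP[/za | /zb].
- by move=> i; rewrite lcoef_cat !lcoef1; case: (z == i); rewrite ?addr0.
Qed.

Lemma rho_coef_max z c a v : m c -> inL [:: (z, a)] -> rho [:: (z, c * a)] v = 0.
Proof.
move=> mc za; case: hrho => _; apply; split.
  by apply: inLam1 (inLam1_dvd za) _; apply: idealMl (BR_I_ideal hs hH hJ z) (inLam1_BR za).
exists [:: (c, [:: (z, a)])]; split; last by move=> i; rewrite /= add0r.
by move=> p; rewrite mem_seq1 => /eqP ->.
Qed.

Lemma rho_mul1 z1 a1 z2 a2 v : inL [:: (z1, a1)] -> inL [:: (z2, a2)] ->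
  rho [:: (z1 + z2, a1 * a2)] v = rho [:: (z1, a1)] (rho [:: (z2, a2)] v).
Proof.
move=> za1 za2; rewrite -rho_lmul // /lmul /=.
by rewrite (sigz_dvd_id hs s_n _ (inLam1_dvd za1)).
Qed.

Lemma rho0_RmodVS : RmodVS m act.
Proof.
split=> [r u v|r r' v|r r' v|v|r v mr].
- by rewrite rho_morphD //; apply: inLam0.
- by rewrite rho_coefD //; apply: inLam0.
- by rewrite -rho_mul1 ?add0r //; apply: inLam0.
- exact: rho1.
- by rewrite -(mulr1 r); apply: rho_coef_max => //; apply: inLam0.
Qed.

Lemma rho_coef_eq1mod z a g v : inL [:: (z, a)] -> m (g - 1) ->
  rho [:: (z, a * g)] v = rho [:: (z, a)] v.
Proof.
move=> za mg; have m_ideal : is_ideal m by case: m_max.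
have -> : a * g = a + (g - 1) * a by rewrite mulrBl mul1r addrCA subrr addr0 mulrC.
rewrite rho_coefD // ?rho_coef_max ?addr0 //.
by apply: inLam1 (inLam1_dvd za) _; apply: idealMl (BR_I_ideal hs hH hJ z) (inLam1_BR za).
Qed.

Variables (e f : R).
Hypotheses (Be : BR n%:Z e) (me : m (e - 1)) (Bf : BR (- n%:Z) f) (mf : m (f - 1)).

Local Notation theta := (rho [:: (n%:Z, e)]).
Local Notation thetai := (rho [:: (- n%:Z, f)]).

Lemma inLam_e : inL [:: (n%:Z, e)]. Proof. exact: inLam1 (dvdzz _) Be. Qed.
Lemma inLam_f : inL [:: (- n%:Z, f)]. Proof. by apply: inLam1 Bf; rewrite rpredN dvdzz. Qed.

(* [(e t^n)(f t^-n) = e f] and [(f t^-n)(e t^n) = f e], both [= 1] modulo [m]. *)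
Lemma rho_RAut : RAut act theta thetai.
Proof.
have [m_ideal _ _] := m_max.
split=> [u v|r v|w|w].
- by rewrite rho_morphD //; apply: inLam_e.
- by rewrite -(rho_mul1 _ inLam_e (@inLam0 _)) -(rho_mul1 _ (@inLam0 _) inLam_e) addr0 add0r mulrC.
- rewrite -(rho_mul1 _ inLam_f inLam_e) addNr.
  by apply: (act_eq1mod rho0_RmodVS); apply: eq1mod_mul.
- rewrite -(rho_mul1 _ inLam_e inLam_f) addrN.
  by apply: (act_eq1mod rho0_RmodVS); apply: eq1mod_mul.
Qed.

Lemma rho_theta_rel : theta_rel s si H J n rho act theta thetai.
Proof.
split=> [a Ba v | b Bb v] /=.
- rewrite -(rho_mul1 _ (@inLam0 _) inLam_e) add0r rho_coef_eq1mod //.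
  exact: inLam1 (dvdzz _) Ba.
- rewrite -(rho_mul1 _ (@inLam0 _) inLam_f) add0r rho_coef_eq1mod //.
  by apply: inLam1 Bb; rewrite rpredN dvdzz.
Qed.

Lemma BR_I_mul_f q a : BR (Posz (q.+1 * n)) a -> BR (Posz (q * n)) (a * f).
Proof.
move=> Ba; apply: idealMr (BR_I_ideal hs hH hJ _) _.
by apply: (@BR_I_posD _ _ _ _ _ _ n); rewrite -mulSnr.
Qed.

Lemma BR_I_mul_e q b : BR (- Posz (q.+1 * n)) b -> BR (- Posz (q * n)) (b * e).
Proof.
case: q => [|q]; first by rewrite mul0n oppr0.
have qn_gt0 k : (0 < k.+1 * n)%N by rewrite muln_gt0.
rewrite !oppz_nat_Negz // => Bb; apply: idealMr (BR_I_ideal hs hH hJ _) _.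
apply: (@BR_I_negD _ _ _ _ _ _ n).
have -> : ((q.+1 * n).-1 + n)%N = (q.+2 * n).-1.
  by rewrite (mulSn q.+1); move: (q.+1 * n)%N (qn_gt0 q) => t t_gt0; lia.
exact: Bb.
Qed.

(* Modulo [(m)], [a t^(qn) = (a f^q)(e t^n)^q] and [b t^(-qn) = (b e^q)(f t^-n)^q]. *)
Lemma rho_closed (P : N -> Prop) : P 0 -> (forall u v, P u -> P v -> P (u + v)) ->
  (forall r v, P v -> P (act r v)) ->
  (forall v, P v -> P (theta v)) -> (forall v, P v -> P (thetai v)) ->
  forall x v, inL x -> P v -> P (rho x v).
Proof.
move=> P0 PD Pact Ptheta Pthetai; have [_ _ thetaK thetaiK] := rho_RAut.
have eL := inLam_e; have fL := inLam_f.
have Ppos q a w : BR (Posz (q * n)) a -> P w -> P (rho [:: (Posz (q * n), a)] w).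
  elim: q a w => [|q ih] a w Ba Pw; first by rewrite mul0n; apply: Pact.
  rewrite -[w]thetaK -rho_mul1 //; last by apply: inLam1 Ba; rewrite PoszM dvdz_mull.
  have -> : Posz (q.+1 * n) + - n%:Z = Posz (q * n) by rewrite mulSnr PoszD addrK.
  by apply: ih; [apply: BR_I_mul_f | apply: Ptheta].
have Pneg q b w : BR (- Posz (q * n)) b -> P w -> P (rho [:: (- Posz (q * n), b)] w).
  elim: q b w => [|q ih] b w Bb Pw; first by rewrite mul0n oppr0; apply: Pact.
  rewrite -[w]thetaiK -rho_mul1 //; last by apply: inLam1 Bb; rewrite rpredN PoszM dvdz_mull.
  have -> : - Posz (q.+1 * n) + n%:Z = - Posz (q * n).
    by rewrite mulSn PoszD opprD addrAC addNr add0r.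
  by apply: ih; [apply: BR_I_mul_e | apply: Pthetai].
elim=> [|[z a] x ih] v xL Pv; first by rewrite rho_nil.
rewrite rho_cons //; have [/(_ _ (mem_head _ _)) [[[q|q] /= ->] Ba] xL'] := inLam_cons xL.
all: apply: PD (ih _ xL' Pv).
- by move: Ba; rewrite -PoszM => Ba; apply: Ppos.
- by move: Ba; rewrite NegzE mulNr -PoszM => Ba; apply: Pneg.
Qed.

Lemma simple_iff_theta_irred (theta' thetai' : N -> N) :
  RAut act theta' thetai' -> theta_rel s si H J n rho act theta' thetai' ->
  (simple_mod s si H J n rho <-> theta_irred act theta').
Proof.
move=> haut [rel_pos rel_neg].
have theta'E v : theta v = theta' v by rewrite rel_pos //; apply: (act_eq1mod rho0_RmodVS).
have thetai'E v : thetai v = thetai' v by rewrite rel_neg //; apply: (act_eq1mod rho0_RmodVS).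
split=> [[nz N_simple] | [nz N_irred]]; split=> // P P0 PD Prho.
- apply: (theta_irred_of_simple m_max rho0_RmodVS haut) => // Q Q0 QD Qact Qtheta Qthetai.
  apply: N_simple => // x v xL Qv; apply: rho_closed => // w Qw.
  + by rewrite theta'E; apply: Qtheta.
  + by rewrite thetai'E; apply: Qthetai.
- apply: N_irred => // [r v Pv | v Pv]; first exact: Prho _ _ (@inLam0 r) Pv.
  by rewrite -theta'E; apply: Prho inLam_e Pv.
Qed.
End QuotientModule.

Theorem lemma3p14 (k : fieldType) (R : comAlgType k)
  (R_domain : forall x y : R, x * y = 0 -> x = 0 \/ y = 0)
  (s : {rmorphism R -> R}) (si : R -> R)
  (s_lin : scalable (s : R -> R))
  (s_si : cancel s si) (si_s : cancel si s)
  (H J : R -> Prop) (H_ideal : is_ideal H) (J_ideal : is_ideal J)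
  (I_nz : forall z : int, exists x, BR_I s si H J z x /\ x <> 0)
  (n : nat) (n_gt0 : (0 < n)%N) (s_n : forall x, iter n s x = x)
  (m : R -> Prop) (m_max : is_max_ideal m)
  (orb : orbit_size_n s n m)
  (no_break : forall j : nat, ~ is_break s H J (img (iter j s) m)) :
  (* (1) *)
  (forall (N : zmodType) (rho : seq (int * R) -> N -> N),
     LamModQ s si H J n m rho ->
     exists theta thetai : N -> N,
       RAut (fun r => rho [:: (0%:Z, r)]) theta thetai /\
       theta_rel s si H J n rho (fun r => rho [:: (0%:Z, r)]) theta thetai) /\
  (* (2) *)
  (forall (N : zmodType) (act : R -> N -> N) (theta thetai : N -> N),
     RmodVS m act -> RAut act theta thetai ->
     exists rho : seq (int * R) -> N -> N,
       [/\ LamModQ s si H J n m rho,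
           (forall r v, rho [:: (0%:Z, r)] v = act r v) &
           theta_rel s si H J n rho act theta thetai]) /\
  (* (3) *)
  (forall (N : zmodType) (rho : seq (int * R) -> N -> N) (theta thetai : N -> N),
     LamModQ s si H J n m rho ->
     RAut (fun r => rho [:: (0%:Z, r)]) theta thetai ->
     theta_rel s si H J n rho (fun r => rho [:: (0%:Z, r)]) theta thetai ->
     (simple_mod s si H J n rho <-> theta_irred (fun r => rho [:: (0%:Z, r)]) theta)).
Proof.
have hs : ring_aut (s : R -> R) si by split; [exact: rmorphD | exact: rmorphM | exact: rmorph1 |..].
have [e Be me] := BR_I_pos_eq1mod hs H_ideal J_ideal m_max no_break s_n.
have [f Bf mf] := BR_I_neg_eq1mod hs H_ideal J_ideal m_max no_break n_gt0.
split; [|split].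
- move=> N rho hrho; exists (rho [:: (n%:Z, e)]), (rho [:: (- n%:Z, f)]); split.
  + exact: (rho_RAut hs H_ideal J_ideal s_n m_max hrho Be me Bf mf).
  + exact: (rho_theta_rel hs H_ideal J_ideal s_n m_max hrho Be me Bf mf).
- by move=> N act theta thetai; apply: (theta_LamModQ H J hs n_gt0 s_n).
- move=> N rho theta thetai hrho.
  exact: (simple_iff_theta_irred hs H_ideal J_ideal n_gt0 s_n m_max hrho Be me Bf mf).
Qed.
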